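(* Let $q$ be a prime power, $s\geq1$, $n=q^{s-1}$, and let $\mathcal{RM}_q(1,s-1)$ be the first order $q$-ary Reed-Muller code. Its extended weight enumerator is \[ W_{\mathcal{RM}_q(1,s-1)}(X,Y,T)=\sum_{r=1}^{s}\left(\prod_{j=0}^{r-1}(T-q^j)\right)\begin{bmatrix} s-1\\ r-1\end{bmatrix}_q Y^n+\sum_{r=0}^{s-1}\left(\prod_{j=0}^{r-1}(T-q^j)\right)q^r\begin{bmatrix} s-1\\ r\end{bmatrix}_q X^{q^{s-1-r}}Y^{q^{s-1}-q^{s-1-r}}. \]
   Context: $\mathcal{RM}_q(1,s-1)$ is the linear $[q^{s-1},s]$ code over $\mathbb{F}_q$ generated by the matrix whose first row is all ones and whose columns, restricted to the remaining $s-1$ rows, run through all vectors of $\mathbb{F}_q^{s-1}$. For a linear $[n,k]$ code $C$ over $\mathbb{F}_q$ and $m\geq1$, the extension code $C\otimes\mathbb{F}_{q^m}$ is the $\mathbb{F}_{q^m}$-linear span of $C$ in $\mathbb{F}_{q^m}^n$. There are (uniquely determined) polynomials $A_w(T)\in\mathbb{Z}[T]$ with $A_w(q^m)$ equal to the number of words of Hamming weight $w$ in $C\otimes\mathbb{F}_{q^m}$ for all $m\geq1$; the extended weight enumerator is $W_C(X,Y,T)=\sum_{w=0}^nA_w(T)X^{n-w}Y^w$. $\begin{bmatrix} a\\ b\end{bmatrix}_q$ is the Gaussian binomial coefficient and the empty product equals $1$. *)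

From HB Require Import structures.
From mathcomp Require Import all_boot all_order all_algebra all_field.
From mathcomp Require Import mpoly.
Set Implicit Arguments. Unset Strict Implicit. Unset Printing Implicit Defensive.
Import Order.TTheory GRing.Theory Num.Theory.
Local Open Scope ring_scope.

Fixpoint qbinom (q a b : nat) {struct a} : nat :=
  match a with
  | 0 => if b is 0 then 1 else 0
  | a'.+1 => match b with
             | 0 => 1
             | b'.+1 => (qbinom q a' b' + q ^ b * qbinom q a' b)%N
             end
  end.

Definition hwt (L : fieldType) (N : nat) (c : 'rV[L]_N) : nat :=
  #|[set j : 'I_N | c 0 j != 0]|.

(* The extension code C (x) L of the code C over F generated by the rows of G,
   where F embeds into L via f: the L-linear span of the rows of G in L^N. *)
Definition ext_code (F L : finFieldType) (f : {rmorphism F -> L}) (k N : nat)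
  (G : 'M[F]_(k, N)) : {set 'rV[L]_N} :=
  [set a *m map_mx f G | a : 'rV[L]_k].

(* A : nat -> Z[T] are polynomials with A w (q^m) = number of words of weight w
   in C (x) F_{q^m} for all m >= 1 (q = |F|); F_{q^m} ranges over all finite
   fields of order q^m together with an embedding of F. *)
Definition ext_wt_polys (F : finFieldType) (k N : nat) (G : 'M[F]_(k, N))
  (A : nat -> {poly int}) : Prop :=
  forall m : nat, (0 < m)%N ->
  forall (L : finFieldType) (f : {rmorphism F -> L}), #|L| = (#|F| ^ m)%N ->
  forall w : nat,
    (A w).[(#|F| ^ m)%:R] = (#|[set c in ext_code f G | hwt c == w]|)%:R.

Definition ext_wt_enum (N : nat) (A : nat -> {poly int}) : {mpoly {poly int}[2]} :=
  \sum_(w < N.+1) (A w)%:MP * 'X_(0 : 'I_2) ^+ (N - w) * 'X_(1 : 'I_2) ^+ w.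

(* Generator matrix of RM_q(1, s-1): first row all ones, the columns restricted
   to the remaining s-1 rows run through all vectors of F^(s-1) (each once). *)
Definition RM_len (F : finFieldType) (s : nat) : nat := #|{: 'rV[F]_s.-1}|.

Definition RM_gen (F : finFieldType) (s : nat) : 'M[F]_(1 + s.-1, RM_len F s) :=
  col_mx (const_mx 1)
         (\matrix_(i < s.-1, j < RM_len F s) (enum_val j : 'rV[F]_s.-1) 0 i).

Definition fallq (q r : nat) : {poly int} := \prod_(j < r) ('X - (q ^ j)%:R%:P).

Definition RM_enum_formula (q s : nat) : {mpoly {poly int}[2]} :=
  \sum_(1 <= r < s.+1)
     (fallq q r * (qbinom q (s - 1) (r - 1))%:R%:P)%:MP
       * 'X_(1 : 'I_2) ^+ (q ^ (s - 1))
  + \sum_(0 <= r < s)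
     (fallq q r * ((q ^ r) * qbinom q (s - 1) r)%:R%:P)%:MP
       * 'X_(0 : 'I_2) ^+ (q ^ (s - 1 - r))
       * 'X_(1 : 'I_2) ^+ (q ^ (s - 1) - q ^ (s - 1 - r)).

(* A message of the extension code is a pair (x, a) with x in L and a in L^k,
   k = s - 1, and the entry of its codeword at the position v in F^k is
   x + sum_i a_i v_i.  The map v |-> sum_i a_i v_i is F-linear; its image is an
   F-subspace of L of some dimension r (the F-rank of a), so the codeword has
   weight q^k - q^(k-r) if x lies in that image and q^k otherwise.  Adding one
   coordinate to a either keeps the image (q^r choices) or enlarges it by one
   dimension (|L| - q^r choices), so the number of a of F-rank r is
   [k, r]_q prod_(j < r) (|L| - q^j), a polynomial in |L|.  These polynomials
   are unique because F has finite extensions of arbitrarily large degree. *)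

From HB Require Import structures.
From mathcomp Require Import all_boot all_order all_algebra all_field.
From mathcomp Require Import mpoly.
From mathcomp Require Import fingroup cyclic ring.
Set Implicit Arguments. Unset Strict Implicit. Unset Printing Implicit Defensive.
Import Order.TTheory GRing.Theory Num.Theory.
Local Open Scope ring_scope.

Lemma natr_card_finField (F : finFieldType) : #|F|%:R = 0 :> F.
Proof. by rewrite -cardsT -FinRing.zmodXgE expg_cardG ?inE. Qed.

Lemma finField_ext_unbounded (F : finFieldType) k : (0 < k)%N ->
  exists2 d, (k <= d)%N &
    exists (L : finFieldType) (f : {rmorphism F -> L}), #|L| = (#|F| ^ d)%N.
Proof.
move=> k_gt0; have q_gt1 := finNzRing_gt1 F; set m := (#|F| ^ k)%N.
have m_gt1 : (1 < m)%N by rewrite (ltn_exp2l 0).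
(* The splitting field of 'X^m - 'X contains its m distinct roots. *)
pose p (R : nzRingType) : {poly R} := 'X^m - 'X.
have size_p (R : nzRingType) : size (p R) = m.+1.
  by rewrite size_polyDl ?size_polyXn // size_polyN size_polyX.
have /FinSplittingFieldFor[/= L [zs DpL _]] : p F != 0.
  by rewrite -size_poly_gt0 size_p.
rewrite [map_poly _ _]rmorphB rmorphXn /= map_polyX -/(p L) in DpL.
pose Lf := FinFieldExtType L.
have card_L : #|Lf| = (#|F| ^ \dim {: L})%N.
  rewrite -(@card_vspace F (finvect_type L) _ fullv).
  exact: esym (@card_vspacef F (finvect_type L) _).
exists (\dim {: L}); last by exists Lf, (in_alg Lf); rewrite card_L.
have m_eq0 : m%:R = 0 :> L.
  by rewrite natrX -(rmorph_nat (in_alg L)) natr_card_finField rmorph0 expr0n gtn_eqF.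
have sep_p : separable_poly (p L).
  by rewrite unlock derivB derivXn derivX -scaler_nat m_eq0 scale0r sub0r
             -scaleN1r coprimepZr ?coprimep1 // oppr_eq0 oner_eq0.
have Uzs : uniq zs by rewrite -separable_prod_XsubC -(eqp_separable DpL).
have size_zs : size zs = m.
  by apply: succn_inj; rewrite -(size_prod_XsubC _ id) -(eqp_size DpL) size_p.
rewrite -(leq_exp2l _ _ q_gt1) -card_L -/m -size_zs.
by rewrite -(card_uniqP (Uzs : uniq (zs : seq Lf))) max_card.
Qed.

Lemma poly_eq0_unbounded_roots (R : idomainType) (p : {poly R}) (x : nat -> R) :
  injective x -> (forall M, exists2 d, (M <= d)%N & root p (x d)) -> p = 0.
Proof.
move=> x_inj roots_p.
suff [ds [size_ds uniq_ds roots_ds]] :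
    exists ds : seq nat, [/\ size ds = size p, uniq ds & all (root p \o x) ds].
  apply: (@roots_geq_poly_eq0 _ p (map x ds)).
  - by rewrite all_map.
  - by rewrite map_inj_uniq.
  - by rewrite size_map size_ds.
elim: (size p) => [|n [ds [size_ds uniq_ds roots_ds]]]; first by exists [::].
have [d ds_lt_d root_d] := roots_p (\max_(i <- ds) i).+1.
exists (d :: ds); split; rewrite /= ?size_ds ?root_d ?uniq_ds ?andbT //.
by apply: contraTN ds_lt_d => ds_d; rewrite -leqNgt; apply: leq_bigmax_seq.
Qed.

Lemma ext_wt_polys_uniq (F : finFieldType) k N (G : 'M[F]_(k, N)) A B :
  ext_wt_polys G A -> ext_wt_polys G B -> A =1 B.
Proof.
move=> GA GB w; apply/eqP; rewrite -subr_eq0; apply/eqP.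
have q_gt1 := finNzRing_gt1 F.
apply: (@poly_eq0_unbounded_roots _ _ (fun d => (#|F| ^ d)%:R)).
  by move=> d1 d2 /eqP; rewrite eqr_nat => /eqP /(expnI q_gt1).
move=> M; have [d le_Md [L [f card_L]]] := finField_ext_unbounded F (ltn0Sn M).
have d_gt0 : (0 < d)%N := leq_trans (ltn0Sn M) le_Md.
exists d; first exact: leq_trans (leqnSn M) le_Md.
by rewrite /root hornerD hornerN (GA d d_gt0 L f card_L) (GB d d_gt0 L f card_L) subrr.
Qed.

Lemma sumr_delta (V : nmodType) N a (lt_aN : (a < N)%N) (g : 'I_N -> V) :
  \sum_(i < N) g i *+ (i == a :> nat) = g (Ordinal lt_aN).
Proof.
rewrite (bigD1 (Ordinal lt_aN)) //= eqxx mulr1n big1 ?addr0 // => i.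
by rewrite -val_eqE /= => /negbTE->; rewrite mulr0n.
Qed.

Lemma card_set_if (T : finType) (A : {set T}) (b1 b2 : bool) :
  #|[set x | if x \in A then b1 else b2]| = (#|A| * b1 + #|~: A| * b2)%N.
Proof.
rewrite -(cardsID A); congr (_ + _)%N.
  rewrite (_ : _ :&: A = if b1 then A else set0); last first.
    by apply/setP => x; case: b1; rewrite ?inE; case: (_ \in _) => //=; rewrite andbF.
  by case: b1; rewrite ?cards0 ?muln1 ?muln0.
rewrite (_ : _ :\: A = if b2 then ~: A else set0); last first.
  by apply/setP => x; case: b2; rewrite ?inE; case: (_ \in _) => //=.
by case: b2; rewrite ?cards0 ?muln1 ?muln0.
Qed.

Lemma fallqS q r : fallq q r.+1 = fallq q r * ('X - (q ^ r)%:R%:P).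
Proof. by rewrite /fallq big_ord_recr. Qed.

Definition RM_wt_poly (q k w : nat) : {poly int} :=
  \sum_(r < k.+1) fallq q r * (qbinom q k r)%:R%:P *
    ((q ^ r)%:R%:P *+ (w == q ^ k - q ^ (k - r))%N
     + ('X - (q ^ r)%:R%:P) *+ (w == q ^ k)%N).

Lemma qbinomn0 q a : qbinom q a 0 = 1%N.
Proof. by case: a. Qed.

Section ConsRow.
Variable R : pzRingType.

Definition cons_row k (x : R) (a : 'rV[R]_k) : 'rV[R]_(1 + k) := row_mx x%:M a.

Lemma cons_row0 k x (a : 'rV[R]_k) : cons_row x a 0 0 = x.
Proof.
rewrite (_ : (0 : 'I_(1 + k)) = lshift k (0 : 'I_1)); last exact: val_inj.
by rewrite row_mxEl mxE eqxx mulr1n.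
Qed.

Lemma cons_row_sub k (a : 'rV[R]_(1 + k)) : cons_row (lsubmx a 0 0) (rsubmx a) = a.
Proof. by rewrite /cons_row -mx11_scalar hsubmxK. Qed.

End ConsRow.

Section RMExtensionCount.
Variables (F L : finFieldType) (f : {rmorphism F -> L}).
Local Notation q := #|F|.

Definition lform k (a : 'rV[L]_k) (v : 'rV[F]_k) : L := \sum_i a 0 i * f (v 0 i).

Fact lform_is_zmod_morphism k (a : 'rV[L]_k) : zmod_morphism (lform a).
Proof.
by move=> u v; rewrite /lform -sumrB; apply: eq_bigr => i _; rewrite !mxE rmorphB mulrBr.
Qed.

HB.instance Definition _ k (a : 'rV[L]_k) :=
  GRing.isZmodMorphism.Build _ _ (lform a) (lform_is_zmod_morphism a).

Lemma lformZ k (a : 'rV[L]_k) c v : lform a (c *: v) = f c * lform a v.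
Proof.
by rewrite /lform mulr_sumr; apply: eq_bigr => i _; rewrite mxE rmorphM mulrCA.
Qed.

Lemma lform_delta k (a : 'rV[L]_k) i : lform a (delta_mx 0 i) = a 0 i.
Proof.
rewrite /lform (bigD1 i) //= big1 => [|j /negbTE neq_ji].
  by rewrite mxE !eqxx rmorph1 mulr1 addr0.
by rewrite mxE neq_ji andbF rmorph0 mulr0.
Qed.

Definition lrange k (a : 'rV[L]_k) : {set L} := [set lform a v | v : 'rV[F]_k].

Section Range.
Variables (k : nat) (a : 'rV[L]_k).

Lemma lrangeN x : x \in lrange a -> - x \in lrange a.
Proof. by case/imsetP=> v _ ->; rewrite -raddfN imset_f. Qed.

Lemma lrangeD x y : x \in lrange a -> y \in lrange a -> x + y \in lrange a.
Proof. by case/imsetP=> u _ -> /imsetP[v _ ->]; rewrite -raddfD imset_f. Qed.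

Lemma lrangeZ c x : x \in lrange a -> f c * x \in lrange a.
Proof. by case/imsetP=> v _ ->; rewrite -lformZ imset_f. Qed.

End Range.

Lemma card_cons_row k (P : pred 'rV[L]_(1 + k)) :
  #|[set a | P a]| = (\sum_(a : 'rV[L]_k) #|[set x | P (cons_row x a)]|)%N.
Proof.
rewrite -sum1_card (reindex (fun xa : 'rV[L]_k * L => cons_row xa.2 xa.1)) /=.
  rewrite -(pair_big_dep xpredT (fun a x => cons_row x a \in [set a | P a])
                                   (fun _ _ => 1%N)) /=.
  apply: eq_bigr => a _.
  by rewrite -sum1_card; apply: eq_bigl => x; rewrite !inE.
exists (fun a => (rsubmx a, lsubmx a 0 0)) => [[a x] _ | a _] /=.
  by rewrite /cons_row row_mxKl row_mxKr mxE eqxx mulr1n.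
exact: cons_row_sub.
Qed.

Lemma lform_cons k x (a : 'rV[L]_k) (v : 'rV[F]_(1 + k)) :
  lform (cons_row x a) v = x * f (v 0 0) + lform a (rsubmx v).
Proof.
rewrite /lform big_split_ord /= big_ord1; congr (_ + _).
  by rewrite (_ : lshift k 0 = 0) ?[cons_row _ _ _ _]cons_row0 //; apply: val_inj.
by apply: eq_bigr => i _; rewrite /cons_row row_mxEr mxE.
Qed.

Lemma lrange_consP k x (a : 'rV[L]_k) y :
  reflect (exists t, y - x * f t \in lrange a) (y \in lrange (cons_row x a)).
Proof.
apply: (iffP imsetP) => [[v _ ->] | [t /imsetP[v _ Dv]]].
  by exists (v 0 0); rewrite lform_cons addrC addKr imset_f.
exists (cons_row t v) => //.
by rewrite lform_cons cons_row0 /cons_row row_mxKr -Dv addrC subrK.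
Qed.

Lemma lrange_cons_mem k x (a : 'rV[L]_k) :
  x \in lrange a -> lrange (cons_row x a) = lrange a.
Proof.
move=> ax; apply/setP => y; apply/lrange_consP/idP => [[t] | ay].
  by rewrite -{2}(subrK (x * f t) y) => /lrangeD; apply; rewrite mulrC lrangeZ.
by exists 0; rewrite rmorph0 mulr0 subr0.
Qed.

Lemma card_lrange_cons_notin k x (a : 'rV[L]_k) :
  x \notin lrange a -> #|lrange (cons_row x a)| = (q * #|lrange a|)%N.
Proof.
move=> a'x.
have -> : lrange (cons_row x a) =
           [set x * f tz.1 + tz.2 | tz in setX [set: F] (lrange a)].
  apply/setP => y; apply/lrange_consP/imsetP => [[t ay] | [[t z]]].
    by exists (t, y - x * f t); rewrite ?inE //= addrC subrK.
  by rewrite !inE /= => az ->; exists t; rewrite addrC addKr.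
rewrite card_in_imset ?cardsX ?cardsT // => -[t1 z1] [t2 z2].
rewrite !inE /= => az1 az2 eq12.
suff eq_t : t1 = t2 by move: eq12; rewrite eq_t => /addrI ->.
apply: contraNeq a'x; rewrite -subr_eq0 => nz_t.
have -> : x = f (t1 - t2)^-1 * (z2 - z1).
  have -> : z2 = x * f t1 + z1 - x * f t2 by rewrite eq12 addrAC subrr add0r.
  rewrite addrAC addrK -mulrBr -rmorphB mulrCA -rmorphM mulVf //.
  by rewrite rmorph1 mulr1.
by rewrite lrangeZ // lrangeD ?lrangeN.
Qed.

Lemma card_lrange_exp k (a : 'rV[L]_k) : exists2 r, (r <= k)%N & #|lrange a| = (q ^ r)%N.
Proof.
elim: k a => [|k IHk] a.
  exists 0%N => //; rewrite expn0 -(cards1 (0 : L)); apply: eq_card => y.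
  rewrite inE; apply/imsetP/eqP => [[v _ ->] | ->].
    by rewrite /lform big_ord0.
  by exists 0; rewrite ?raddf0.
rewrite -[a](@cons_row_sub _ k); set x := lsubmx _ 0 0; set b := rsubmx _.
have [r le_rk card_b] := IHk b.
have [bx | b'x] := boolP (x \in lrange b).
  by exists r; rewrite ?lrange_cons_mem ?leqW.
by exists r.+1; rewrite ?card_lrange_cons_notin ?card_b ?expnS.
Qed.

(* The F-dimension of the F-span of the entries of a. *)
Definition frank k (a : 'rV[L]_k) : nat := trunc_log q #|lrange a|.

Lemma card_lrange k (a : 'rV[L]_k) : #|lrange a| = (q ^ frank a)%N.
Proof.
by rewrite /frank; have [r _ ->] := card_lrange_exp a; rewrite trunc_expnK ?finNzRing_gt1.
Qed.

Lemma frank_leq k (a : 'rV[L]_k) : (frank a <= k)%N.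
Proof.
have [r le_rk card_a] := card_lrange_exp a.
by rewrite /frank card_a trunc_expnK ?finNzRing_gt1.
Qed.

Lemma frank_cons k x (a : 'rV[L]_k) :
  frank (cons_row x a) = if x \in lrange a then frank a else (frank a).+1.
Proof.
rewrite {1}/frank.
case: ifP => [/lrange_cons_mem -> // | /negbT/card_lrange_cons_notin ->].
by rewrite card_lrange -expnS trunc_expnK ?finNzRing_gt1.
Qed.

Lemma card_lrange_if k (a : 'rV[L]_k) (b1 b2 : bool) (P : pred L) :
  (forall x, P x = if x \in lrange a then b1 else b2) ->
  #|[set x | P x]|%:R
    = (q ^ frank a)%:R *+ b1 + (#|L|%:R - (q ^ frank a)%:R) *+ b2 :> int.
Proof.
move=> DP; rewrite (eq_card (B := [set x | if x \in lrange a then b1 else b2])) => [|x].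
  rewrite card_set_if -[#|L|](cardsC (lrange a)) card_lrange natrD !natrM !mulr_natr.
  by rewrite natrD addrAC subrr add0r.
by rewrite !inE DP.
Qed.

Definition nfrank k r := #|[set a : 'rV[L]_k | frank a == r]|.

Lemma sum_by_frank (V : nmodType) k N (G : nat -> V) : (k < N)%N ->
  \sum_(a : 'rV[L]_k) G (frank a) = \sum_(r < N) G r *+ nfrank k r.
Proof.
move=> lt_kN; have lt_aN a : (frank a < N)%N := leq_ltn_trans (frank_leq a) lt_kN.
rewrite (partition_big (fun a => Ordinal (lt_aN a)) xpredT) //=.
apply: eq_bigr => r _; rewrite -sumr_const.
by apply: eq_big => [a | a /eqP <-] //; rewrite inE -val_eqE.
Qed.

Lemma nfrank_cons k m :
  (nfrank k.+1 m)%:R = \sum_(r < (k + m).+1)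
    ((q ^ r)%:R *+ (r == m :> nat) + (#|L|%:R - (q ^ r)%:R) *+ (r.+1 == m))
      *+ nfrank k r :> int.
Proof.
pose G r : int := (q ^ r)%:R *+ (r == m) + (#|L|%:R - (q ^ r)%:R) *+ (r.+1 == m).
rewrite -(sum_by_frank G) ?ltnS ?leq_addr // /nfrank.
rewrite (card_cons_row (fun a => frank a == m)) natr_sum; apply: eq_bigr => a _.
by rewrite /G; apply: card_lrange_if => x; rewrite frank_cons; case: ifP.
Qed.

Lemma nfrank_qbinom k r :
  (nfrank k r)%:R = (qbinom q k r)%:R * (fallq q r).[#|L|%:R] :> int.
Proof.
elim: k r => [|k IHk] m.
  have frank0 (a : 'rV[L]_0) : frank a = 0%N by apply/eqP; rewrite -leqn0 frank_leq.
  rewrite /nfrank; case: m => [|m].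
    rewrite (eq_card (B := [set: 'rV[L]_0])) => [|a]; last by rewrite !inE frank0.
    by rewrite cardsT card_mx /fallq big_ord0 hornerC mul1r.
  by rewrite eq_card0 ?mul0r // => a; rewrite !inE frank0.
rewrite nfrank_cons.
under eq_bigr => r _ do rewrite -mulr_natr IHk mulrDl !mulrnAl.
have lt_R : (m < (k + m).+1)%N by rewrite ltnS leq_addl.
rewrite big_split /= (sumr_delta lt_R).
case: m lt_R => [|m] lt_R.
  rewrite big1 ?addr0 => [|r _]; last by rewrite mulr0n.
  by rewrite !qbinomn0 expn0 /fallq big_ord0 hornerC !mul1r.
have lt_R' : (m < (k + m.+1).+1)%N by rewrite ltnS; apply/ltnW/leq_addl.
under eq_bigr => r _ do rewrite eqSS.
rewrite (sumr_delta lt_R') fallqS hornerM hornerXsubC /=.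
by rewrite natrD natrM; ring.
Qed.

Lemma card_lform_fiber_ker k (a : 'rV[L]_k) y : y \in lrange a ->
  #|[set v | lform a v == y]| = #|[set v | lform a v == 0]|.
Proof.
case/imsetP => v0 _ ->; rewrite -(card_imset [set v | lform a v == 0] (addIr v0)).
apply: eq_card => v; rewrite inE.
apply/eqP/imsetP => [Dv | [u /[!inE] /eqP u0 ->]]; last by rewrite /= raddfD /= u0 add0r.
by exists (v - v0); rewrite ?subrK // inE raddfB /= Dv subrr.
Qed.

Lemma card_lform_fiber k (a : 'rV[L]_k) y : y \in lrange a ->
  #|[set v | lform a v == y]| = (q ^ (k - frank a))%N.
Proof.
move/card_lform_fiber_ker->.
have : (q ^ k)%N = (#|lrange a| * #|[set v | lform a v == 0%R]|)%N.
  have -> : (q ^ k)%N = (\sum_(v : 'rV[F]_k) 1)%N by rewrite sum1_card card_mx mul1n.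
  rewrite (partition_big (lform a) (mem (lrange a))) /=; last by move=> v _; apply: imset_f.
  rewrite -sum_nat_const; apply: eq_bigr => z az.
  by rewrite -(card_lform_fiber_ker az) -sum1_card; apply: eq_bigl => v; rewrite inE.
rewrite card_lrange expnB ?(ltnW (finNzRing_gt1 F)) ?frank_leq // => ->.
by rewrite mulKn // expn_gt0 ltnW ?finNzRing_gt1.
Qed.

Lemma RM_codeword_cons k x (a : 'rV[L]_k) (v : 'rV[F]_k) :
  (cons_row x a *m map_mx f (RM_gen F k.+1)) 0 (enum_rank v) = x + lform a v.
Proof.
rewrite /cons_row /RM_gen map_col_mx mul_row_col mxE; congr (_ + _).
  by rewrite mul_scalar_mx !mxE rmorph1 mulr1.
by rewrite mxE; apply: eq_bigr => i _; rewrite !mxE enum_rankK.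
Qed.

Lemma hwt_RM_codeword k x (a : 'rV[L]_k) :
  hwt (cons_row x a *m map_mx f (RM_gen F k.+1)) =
  if x \in lrange a then (q ^ k - q ^ (k - frank a))%N else (q ^ k)%N.
Proof.
have -> : hwt (cons_row x a *m map_mx f (RM_gen F k.+1)) =
           #|[set v | x + lform a v != 0]|.
  rewrite /hwt -[RHS](card_imset _ (@enum_rank_inj _)); apply: eq_card => j.
  by rewrite inE -[j]enum_valK mem_imset ?inE ?RM_codeword_cons //; apply: enum_rank_inj.
rewrite cardsCs card_mx mul1n (eq_card (B := [set v | lform a v == - x])) => [|v]; last first.
  by rewrite !inE negbK addrC addr_eq0.
case: ifP => [ax | /negbT a'x]; first by rewrite card_lform_fiber ?lrangeN.
rewrite eq_card0 ?subn0 // => v; rewrite inE; apply: contraNF a'x => /eqP Dv.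
by rewrite -[x]opprK -Dv lrangeN ?imset_f.
Qed.

Lemma RM_encode_inj k :
  injective (fun a : 'rV[L]_(1 + k) => a *m map_mx f (RM_gen F k.+1)).
Proof.
move=> a b /= eq_ab; rewrite -[a](@cons_row_sub _ k) -[b](@cons_row_sub _ k).
have eq_lform v : lsubmx a 0 0 + lform (rsubmx a) v = lsubmx b 0 0 + lform (rsubmx b) v.
  by rewrite -!RM_codeword_cons !cons_row_sub eq_ab.
have eq_x := eq_lform 0; rewrite !raddf0 !addr0 in eq_x.
rewrite eq_x; congr cons_row; apply/rowP => i.
by have := eq_lform (delta_mx 0 i); rewrite eq_x !lform_delta => /addrI.
Qed.

Lemma card_RM_wt k w :
  #|[set a : 'rV[L]_(1 + k) | hwt (a *m map_mx f (RM_gen F k.+1)) == w]|%:R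
    = (RM_wt_poly q k w).[#|L|%:R] :> int.
Proof.
pose G r : int := (q ^ r)%:R *+ (q ^ k - q ^ (k - r) == w)%N
                  + (#|L|%:R - (q ^ r)%:R) *+ (q ^ k == w)%N.
rewrite (card_cons_row (fun a => hwt (a *m _) == w)) natr_sum.
transitivity (\sum_(a : 'rV[L]_k) G (frank a)).
  apply: eq_bigr => a _; apply: card_lrange_if => x.
  by rewrite hwt_RM_codeword; case: ifP.
rewrite (@sum_by_frank _ _ k.+1 G) // /RM_wt_poly horner_sum; apply: eq_bigr => r _.
rewrite -[G r *+ _]mulr_natr nfrank_qbinom /G !hornerE ![(w == _)]eq_sym.
rewrite !hornerMn hornerC hornerXsubC /=; ring.
Qed.

End RMExtensionCount.

Lemma card_ext_code (F L : finFieldType) (f : {rmorphism F -> L}) k N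
    (G : 'M[F]_(k, N)) (P : pred 'rV[L]_N) :
  injective (fun a : 'rV[L]_k => a *m map_mx f G) ->
  #|[set c in ext_code f G | P c]| = #|[set a : 'rV[L]_k | P (a *m map_mx f G)]|.
Proof.
move=> G_inj; rewrite -(card_imset _ G_inj); apply: eq_card => c; rewrite !inE.
apply/andP/imsetP => [[/imsetP[a _ ->] Pc] | [a]]; first by exists a; rewrite ?inE.
by rewrite inE => Pa ->; split => //; apply/imsetP; exists a.
Qed.

Lemma RM_ext_wt_polys (F : finFieldType) k :
  ext_wt_polys (RM_gen F k.+1) (RM_wt_poly #|F| k).
Proof.
move=> m _ L f card_L w.
by rewrite -card_L -(card_RM_wt f) card_ext_code //; apply: RM_encode_inj.
Qed.

Lemma RM_wt_enum q k : (0 < q)%N ->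
  ext_wt_enum (q ^ k) (RM_wt_poly q k) = RM_enum_formula q k.+1.
Proof.
move=> q_gt0; set n := (q ^ k)%N.
rewrite /ext_wt_enum /RM_enum_formula !subn1 /= big_add1 /= !big_mkord addrC.
under eq_bigr => w _ do rewrite /RM_wt_poly rmorph_sum /= !mulr_suml.
rewrite exchange_big -big_split /=; apply: eq_bigr => r _.
under eq_bigr => w _ do rewrite rmorphM rmorphD !rmorphMn mulrDr !mulrDl !mulrnAr !mulrnAl.
have lt_wt : (q ^ k - q ^ (k - r) < n.+1)%N by rewrite ltnS leq_subr.
rewrite big_split /= (sumr_delta lt_wt) (sumr_delta (ltnSn n)) /=.
rewrite subnn expr0 mulr1 subKn ?leq_pexp2l ?leq_subr // subn1 /= fallqS.
rewrite !rmorphM !rmorphMn !rmorphB /= !rmorph_nat /= !rmorph1 mulr1; ring.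
Qed.

Unset Implicit Arguments.
Set Strict Implicit.

Theorem mainTheorem6 (F : finFieldType) (s : nat) :
  (1 <= s)%N ->
  (exists A : nat -> {poly int}, ext_wt_polys (RM_gen F s) A) /\
  (forall A : nat -> {poly int}, ext_wt_polys (RM_gen F s) A ->
     ext_wt_enum (RM_len F s) A = RM_enum_formula #|F| s).
Proof.
case: s => // k _; have RM_A := @RM_ext_wt_polys F k.
split; first by exists (RM_wt_poly #|F| k).
move=> A /ext_wt_polys_uniq/(_ RM_A) eq_A.
rewrite /RM_len card_mx mul1n -(RM_wt_enum k (ltnW (finNzRing_gt1 F))).
by apply: eq_bigr => w _; rewrite eq_A.
Qed.
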